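(* Let $\vec{\alpha}=\langle\alpha_s:s\in[\mathbb{N}]^{<\infty}\rangle$ be a sequence of nonstandard hypernatural numbers. Suppose $H\subseteq[\mathbb{N}]^{<\infty}$ satisfies $s\cup\{\alpha_s\}\in{}^*H$ for all $s\in H$. Then for every $\vec{\alpha}$-tree $T$ with $st(T)\in H$ there exists an $\vec{\alpha}$-tree $S\subseteq T$ with $st(S)=st(T)$ such that $S/st(S)\subseteq H$.
   Context: Setting (Alpha-Theory of Benci–Di Nasso): ZFC together with a new symbol $\alpha$ satisfying: ($\alpha$1) every sequence $\varphi=\langle\varphi_i:i\in\mathbb{N}\rangle$ has a unique ideal value $\varphi[\alpha]$; ($\alpha$2) if $\varphi[\alpha]=\psi[\alpha]$ and $f\circ\varphi$, $f\circ\psi$ make sense then $(f\circ\varphi)[\alpha]=(f\circ\psi)[\alpha]$; ($\alpha$3) constant real sequences $r$ have ideal value $r$, and $\langle i\rangle$ has ideal value $\alpha\notin\mathbb{N}$; ($\alpha$4) if $\vartheta_i=\{\varphi_i,\psi_i\}$ then $\vartheta[\alpha]=\{\varphi[\alpha],\psi[\alpha]\}$; ($\alpha$5) the constant sequence $\emptyset$ has ideal value $\emptyset$, and for nonempty $\psi_i$, $\psi[\alpha]=\{\vartheta[\alpha]:\vartheta_i\in\psi_i\ \forall i\}$. ${}^*A$ is the ideal value of the constant sequence $A$; elements of ${}^*\mathbb{N}\setminus\mathbb{N}$ are nonstandard hypernatural numbers. For finite $s,t\subseteq\mathbb{N}$, $s\sqsubseteq t$ means $s=\{j\in t:j\le i\}$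 for some $i$. A tree on $\mathbb{N}$ is a nonempty $T\subseteq[\mathbb{N}]^{<\infty}$ closed under $\sqsubseteq$-initial segments; stem $st(T)$ = $\sqsubseteq$-maximal $s\in T$ comparable with all elements of $T$ (if it exists); $T/s=\{t\in T:s\sqsubseteq t\}$. An $\vec{\alpha}$-tree is a tree $T$ with a stem, $T/st(T)\neq\emptyset$, and $s\cup\{\alpha_s\}\in{}^*T$ for all $s\in T/st(T)$. *)

From mathcomp Require Import all_boot.
From mathcomp Require Import finmap.
Set Implicit Arguments. Unset Strict Implicit. Unset Printing Implicit Defensive.
Local Open Scope fset_scope.

Definition ultrafilter (U : (nat -> Prop) -> Prop) : Prop :=
  (forall A B : nat -> Prop, U A -> (forall i, A i -> B i) -> U B) /\
  (forall A B : nat -> Prop, U A -> U B -> U (fun i => A i /\ B i)) /\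
  ~ U (fun _ => False) /\
  (forall A : nat -> Prop, U A \/ U (fun i => ~ A i)).

(* U is the ultrafilter U_alpha = {A | alpha \in *A}; alpha \notin N means
   U contains every cosingleton. *)
Definition alpha_ultrafilter (U : (nat -> Prop) -> Prop) : Prop :=
  ultrafilter U /\ forall n : nat, U (fun i => i <> n).

(* The hypernatural [a] (a : nat -> nat) is nonstandard. *)
Definition nonstandard (U : (nat -> Prop) -> Prop) (a : nat -> nat) : Prop :=
  forall n : nat, U (fun i => a i <> n).

(* s \in *H for the hyperfinite set represented by the sequence phi. *)
Definition star_mem (U : (nat -> Prop) -> Prop) (H : {fset nat} -> Prop)
  (phi : nat -> {fset nat}) : Prop := U (fun i => H (phi i)).

Definition sqsub (s t : {fset nat}) : Prop :=
  exists i : nat, s = [fset j in t | (j <= i)%N].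

Definition comparable (s t : {fset nat}) : Prop := sqsub s t \/ sqsub t s.

Definition is_tree (T : {fset nat} -> Prop) : Prop :=
  (exists t, T t) /\ (forall s t, T t -> sqsub s t -> T s).

Definition is_stem (T : {fset nat} -> Prop) (s : {fset nat}) : Prop :=
  T s /\ (forall t, T t -> comparable s t) /\
  (forall s', T s' -> (forall t, T t -> comparable s' t) -> sqsub s' s).

Definition tree_above (T : {fset nat} -> Prop) (s : {fset nat}) :=
  fun t => T t /\ sqsub s t.

(* alpha-vector given by a : {fset nat} -> (nat -> nat), alpha_s = [a s]. *)
Definition alpha_tree (U : (nat -> Prop) -> Prop)
  (a : {fset nat} -> nat -> nat) (T : {fset nat} -> Prop) : Prop :=
  is_tree T /\ exists st, is_stem T st /\ (exists t, tree_above T st t) /\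
    forall s, tree_above T st s -> star_mem U T (fun i => s `|` [fset a s i]).

From Pilot Require Import Defs.
From mathcomp Require Import all_boot.
From mathcomp Require Import finmap.
From Stdlib Require Import Classical.
Local Open Scope fset_scope.
Set Implicit Arguments.

(* Keep the nodes of T below the stem, and those above it all of whose initial
   segments from the stem on lie in H.  Intersecting, in the ultrafilter, the
   alpha-tree property of T at a node s, the closure property of H at s and
   [max s < alpha_s] shows that the pruned tree still contains ultrafilter-many
   one-point end-extensions of s.  Such an extension adds a point beyond
   everything already present, so it is not an initial segment of any other
   candidate stem: the stem of T remains the stem of the pruned tree. *)

Lemma sqsub_mem {s t : {fset nat}} {j : nat} : sqsub s t -> j \in s -> j \in t.
Proof. by move=> [i ->]; rewrite !inE => /andP[]. Qed.

Lemma leq_fset_max {s : {fset nat}} {j : nat} : j \in s -> (j <= \max_(i <- s) i)%N.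
Proof. by move=> js; apply: leq_bigmax_seq. Qed.

Lemma max_lt_notin {s : {fset nat}} {x : nat} : (\max_(j <- s) j < x)%N -> x \notin s.
Proof.
move=> hx; apply/negP => xs.
by move: hx; rewrite ltnNge (leq_fset_max xs).
Qed.

Lemma sqsub_refl (s : {fset nat}) : sqsub s s.
Proof.
exists (\max_(j <- s) j); apply/fsetP => j; rewrite !inE.
by case js: (j \in s); rewrite //= (leq_fset_max js).
Qed.

Lemma sqsub_trans {s t w : {fset nat}} : sqsub s t -> sqsub t w -> sqsub s w.
Proof.
move=> [i ->] [k ->]; exists (minn i k); apply/fsetP => j; rewrite !inE.
by rewrite leq_min -andbA [(j <= k) && _]andbC.
Qed.

Lemma sqsub_anti {s t : {fset nat}} : sqsub s t -> sqsub t s -> s = t.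
Proof.
by move=> st ts; apply/fsetP => j; apply/idP/idP; apply: sqsub_mem.
Qed.

Lemma sqsub_segments (t : {fset nat}) (i k : nat) : (i <= k)%N ->
  sqsub [fset j in t | (j <= i)%N] [fset j in t | (j <= k)%N].
Proof.
move=> le_ik; exists i; apply/fsetP => j; rewrite !inE.
by case: (j \in t); case ji: (j <= i)%N; rewrite ?andbF //= (leq_trans ji le_ik).
Qed.

Lemma sqsub_total {s s' t : {fset nat}} :
  sqsub s t -> sqsub s' t -> sqsub s s' \/ sqsub s' s.
Proof.
move=> [i ->] [k ->]; case: (leqP i k) => [le_ik | /ltnW le_ki].
- by left; apply: sqsub_segments.
- by right; apply: sqsub_segments.
Qed.

Lemma sqsub_fsetU1 {s : {fset nat}} {x : nat} :
  (\max_(j <- s) j < x)%N -> sqsub s (s `|` [fset x]).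
Proof.
move=> hx; exists (\max_(j <- s) j); apply/fsetP => j; rewrite !inE.
case js: (j \in s) => /=; first by rewrite (leq_fset_max js).
by case: eqP => //= ->; rewrite leqNgt hx.
Qed.

Lemma sqsub_fsetU1P {u s : {fset nat}} {x : nat} : (\max_(j <- s) j < x)%N ->
  sqsub u (s `|` [fset x]) -> sqsub u s \/ u = s `|` [fset x].
Proof.
move=> hx [i ->]; case: (leqP x i) => [le_xi | lt_ix].
- right; apply/fsetP => j; rewrite !inE.
  case js: (j \in s) => /=.
    by rewrite (leq_trans (leq_fset_max js) (ltnW (leq_trans hx le_xi))).
  by case: eqP => //= ->.
- left; exists i; apply/fsetP => j; rewrite !inE.
  case: eqP => [->|_]; last by rewrite orbF.
  by rewrite orbT /= leqNgt lt_ix andbF.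
Qed.

Lemma stem_unique (T : {fset nat} -> Prop) (s s' : {fset nat}) :
  is_stem T s -> is_stem T s' -> s = s'.
Proof.
move=> [Ts [cs maxs]] [Ts' [cs' maxs']].
by apply: sqsub_anti; [apply: maxs' | apply: maxs].
Qed.

Section Ultrafilter.

Variable U : (nat -> Prop) -> Prop.
Hypothesis hU : ultrafilter U.

Lemma filterS {A B : nat -> Prop} : U A -> (forall i, A i -> B i) -> U B.
Proof. by case: hU => [h _]; apply: h. Qed.

Lemma filterI {A B : nat -> Prop} : U A -> U B -> U (fun i => A i /\ B i).
Proof. by case: hU => [_ [h _]]; apply: h. Qed.

Lemma filter_ex (A : nat -> Prop) : U A -> exists i, A i.
Proof.
case: hU => [_ [_ [U0 _]]] UA; apply: NNPP => noA.
by apply: U0; apply: (filterS UA) => i Ai; apply: noA; exists i.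
Qed.

Lemma nonstandard_gt (f : nat -> nat) (m : nat) :
  nonstandard U f -> U (fun i => m < f i)%N.
Proof.
move=> nsf; elim: m => [|m IH]; first by apply: (filterS (nsf 0)) => i; case: (f i).
apply: (filterS (filterI IH (nsf m.+1))) => i [lt_mf ne_f].
by rewrite ltn_neqAle lt_mf andbT eq_sym; apply/eqP.
Qed.

Lemma stem_of_star_extensions (a : nat -> nat) (T : {fset nat} -> Prop)
    (s : {fset nat}) :
  nonstandard U a -> T s -> (forall t, T t -> Defs.comparable s t) ->
  star_mem U T (fun i => s `|` [fset a i]) -> is_stem T s.
Proof.
move=> nsa Ts cs Text; split=> //; split=> // s' _ cs'.
have [i [Tsx [lt_sx lt_s'x]]] := filter_ex
  (filterI Text (filterI (nonstandard_gt (\max_(j <- s) j) nsa)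
                         (nonstandard_gt (\max_(j <- s') j) nsa))).
have xs' := max_lt_notin lt_s'x.
have [s'_sx | sx_s'] : sqsub s' _ \/ sqsub _ s' := cs' _ Tsx.
- case: (sqsub_fsetU1P lt_sx s'_sx) => [// | e].
  by move: xs'; rewrite e !inE eqxx orbT.
- by move: xs'; rewrite (sqsub_mem sx_s') // !inE eqxx orbT.
Qed.

End Ultrafilter.

Section Pruning.

Variables (T H : {fset nat} -> Prop) (st : {fset nat}).
Hypothesis Hst : H st.

Definition prune (t : {fset nat}) : Prop :=
  T t /\ (sqsub t st \/ (sqsub st t /\ forall u, sqsub st u -> sqsub u t -> H u)).

Lemma prune_sub (t : {fset nat}) : prune t -> T t.
Proof. by case. Qed.

Lemma prune_stem : T st -> prune st.
Proof. by split=> //; left; apply: sqsub_refl. Qed.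

Lemma prune_comparable (t : {fset nat}) : prune t -> Defs.comparable st t.
Proof. by move=> [_ [t_st | [st_t _]]]; [right | left]. Qed.

Lemma prune_segments (t : {fset nat}) : prune t -> sqsub st t ->
  forall u, sqsub st u -> sqsub u t -> H u.
Proof.
move=> [_ [t_st | [_ Ht]]] st_t u st_u u_t; last exact: Ht.
by rewrite (sqsub_anti (sqsub_trans u_t t_st) st_u).
Qed.

Lemma prune_tree : T st -> is_tree T -> is_tree prune.
Proof.
move=> Tst [_ Tclosed]; split; first by exists st; apply: prune_stem.
move=> s t [Tt t_st_or_above] s_t; split; first exact: Tclosed Tt s_t.
case: t_st_or_above => [t_st | [st_t Ht]]; first by left; apply: sqsub_trans s_t t_st.
case: (sqsub_total s_t st_t) => [s_st | st_s]; first by left.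
by right; split=> // u st_u u_s; apply: Ht st_u (sqsub_trans u_s s_t).
Qed.

Lemma prune_fsetU1 (s : {fset nat}) (x : nat) :
  prune s -> sqsub st s -> (\max_(j <- s) j < x)%N ->
  T (s `|` [fset x]) -> H (s `|` [fset x]) -> prune (s `|` [fset x]).
Proof.
move=> ps st_s lt_sx Tsx Hsx; split=> //; right.
split; first exact: sqsub_trans st_s (sqsub_fsetU1 lt_sx).
move=> u st_u u_sx; case: (sqsub_fsetU1P lt_sx u_sx) => [u_s | {u_sx}-> //].
exact: prune_segments ps st_s u st_u u_s.
Qed.

Lemma prune_star (U : (nat -> Prop) -> Prop) (a : nat -> nat) (s : {fset nat}) :
  ultrafilter U -> nonstandard U a -> prune s -> sqsub st s ->
  star_mem U T (fun i => s `|` [fset a i]) ->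
  star_mem U H (fun i => s `|` [fset a i]) ->
  star_mem U prune (fun i => s `|` [fset a i]).
Proof.
move=> hU nsa ps st_s Text Hext.
have gt_max := nonstandard_gt hU (\max_(j <- s) j) nsa.
apply: (filterS hU (filterI hU Text (filterI hU Hext gt_max))) => i [Tsx [Hsx lt_sx]].
exact: prune_fsetU1.
Qed.

End Pruning.

Theorem mainTheorem17 (U : (nat -> Prop) -> Prop)
  (a : {fset nat} -> nat -> nat) (H : {fset nat} -> Prop) :
  alpha_ultrafilter U ->
  (forall s, nonstandard U (a s)) ->
  (forall s, H s -> star_mem U H (fun i => s `|` [fset a s i])) ->
  forall (T : {fset nat} -> Prop) (st : {fset nat}),
    alpha_tree U a T -> is_stem T st -> H st ->
    exists S : {fset nat} -> Prop,
      (forall t, S t -> T t) /\ alpha_tree U a S /\ is_stem S st /\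
      (forall t, tree_above S st t -> H t).
Proof.
move=> [hU _] nsa Hext T st [treeT [st' [stemT' [_ Text]]]] stemT Hst.
rewrite (stem_unique stemT' stemT) {st' stemT'} in Text.
set S := prune T H st.
have H_above t : tree_above S st t -> H t.
  by move=> [St st_t]; exact: (prune_segments Hst St st_t st_t (sqsub_refl t)).
have S_ext s : tree_above S st s -> star_mem U S (fun i => s `|` [fset a s i]).
  move=> [Ss st_s]; have Hs := H_above s (conj Ss st_s).
  have Ts := Text s (conj (prune_sub Ss) st_s).
  exact: (prune_star Hst hU (nsa s) Ss st_s Ts (Hext s Hs)).
have Sst : S st by apply: prune_stem; exact: stemT.1.
have stemS : is_stem S st.
  apply: (stem_of_star_extensions hU S (nsa st) Sst (@prune_comparable T H st)).
  by apply: S_ext; split=> //; apply: sqsub_refl.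
exists S; split; first exact: prune_sub.
split=> //; split; first exact: (prune_tree _ _ stemT.1 treeT).
by exists st; split=> //; split=> //; exists st; split=> //; apply: sqsub_refl.
Qed.
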